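(* Let $\mu>0$, $L>0$, let $g:\mathbb{R}^n\to\mathbb{R}$ be $\mu$-strongly convex and $(L+\mu)$-smooth, let $h$ be proper closed convex, $\psi=g+h$, and run the ACG method (see context) from $x_0\in\mathbb{R}^n$. Then for every $j\ge0$, $$A_j\psi(y_j)\le\min_{u\in\mathbb{R}^n}\left\{A_j\Gamma_j(u)+\tfrac12\|u-x_0\|^2\right\}.$$
   Context: $\ell_g(u;x)=g(x)+\langle\nabla g(x),u-x\rangle$. ACG method: $A_0=0$, $\tau_0=1/L$, $y_0=x_0$; for $j\ge0$: $a_j=\frac{\tau_j+\sqrt{\tau_j^2+4\tau_jA_j}}{2}$, $\tau_{j+1}=\tau_j+\mu a_j/L$, $A_{j+1}=A_j+a_j$, $\tilde x_j=\frac{A_j}{A_{j+1}}y_j+\frac{a_j}{A_{j+1}}x_j$; $\tilde y_{j+1}=\mathrm{argmin}_u\{\ell_g(u;\tilde x_j)+h(u)+\frac{L+\mu}{2}\|u-\tilde x_j\|^2\}$; $y_{j+1}\in\mathrm{Argmin}\{\psi(u):u\in\{y_j,\tilde y_{j+1}\}\}$; $x_{j+1}=\frac{(L+\mu)a_j\tilde y_{j+1}-\frac{A_ja_jL}{A_{j+1}}y_j}{A_{j+1}\mu+1}$. Define $\tilde\gamma_j(u)=\ell_g(u;\tilde x_j)+h(u)+\frac\mu2\|u-\tilde x_j\|^2$, $\gamma_j(u)=\tilde\gamma_j(\tilde y_{j+1})+L\langle\tilde x_j-\tilde y_{j+1},u-\tilde y_{j+1}\rangle+\frac\mu2\|u-\tilde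 y_{j+1}\|^2$, $\Gamma_0\equiv0$, $\Gamma_{j+1}=(A_j\Gamma_j+a_j\gamma_j)/A_{j+1}$. The case $j=0$ reads $0\le\min_u\frac12\|u-x_0\|^2$. *)

From HB Require Import structures.
From mathcomp Require Import all_boot all_order all_algebra.
From mathcomp Require Import all_classical all_reals all_analysis.
Set Implicit Arguments. Unset Strict Implicit. Unset Printing Implicit Defensive.
Import Order.TTheory GRing.Theory Num.Theory.
Import numFieldNormedType.Exports.
Local Open Scope classical_set_scope.
Local Open Scope ring_scope.

Section Defs.
Context {R : realType} {n : nat}.
Notation V := 'rV[R]_n.

Definition dotv (u v : V) : R := \sum_(i < n) u ord0 i * v ord0 i.
Definition enorm (u : V) : R := Num.sqrt (dotv u u).

Definition is_gradient (g : V -> R) (dg : V -> V) : Prop :=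
  forall x, differentiable g x /\ forall v, 'd g x v = dotv (dg x) v.

Definition smooth_with (M : R) (g : V -> R) (dg : V -> V) : Prop :=
  is_gradient g dg /\ forall x y, enorm (dg x - dg y) <= M * enorm (x - y).

Definition strongly_convex (mu : R) (g : V -> R) : Prop :=
  forall (x y : V) (t : R), 0 <= t <= 1 ->
    g (t *: x + (1 - t) *: y)
      <= t * g x + (1 - t) * g y - mu / 2 * t * (1 - t) * enorm (x - y) ^+ 2.

Definition proper_fun (h : V -> \bar R) : Prop :=
  (forall x, h x != -oo%E) /\ (exists x, h x \is a fin_num).

Definition epigraph (h : V -> \bar R) : set (V * R) :=
  [set p | (h p.1 <= p.2%:E)%E].

Definition closed_fun (h : V -> \bar R) : Prop := closed (epigraph h).

Definition convex_fun (h : V -> \bar R) : Prop :=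
  forall (x y : V) (t : R), 0 <= t <= 1 ->
    (h (t *: x + (1 - t) *: y)%R <= (t%:E * h x + (1 - t)%:E * h y)%E)%E.

Definition lin (g : V -> R) (dg : V -> V) (x u : V) : R :=
  g x + dotv (dg x) (u - x).

End Defs.

From HB Require Import structures.
From mathcomp Require Import all_boot all_order all_algebra.
From mathcomp Require Import all_classical all_reals all_analysis.
From mathcomp Require Import ring lra.
Import Order.TTheory GRing.Theory Num.Theory.
Import numFieldNormedType.Exports.
Local Open Scope classical_set_scope.
Local Open Scope ring_scope.

(* Estimate-sequence argument: by induction on j,
     A_j psi(y_j) + (1 + mu A_j)/2 |u - x_j|^2 <= A_j Gamma_j(u) + |u - x_0|^2/2.
   Three facts drive the induction step. Every model gamma_j lies below psi:
   the prox objective is (L+mu)-strongly convex and minimised at yt_{j+1}, which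
   bounds gamma_j by the linearisation model gamt_j, and strong convexity of g
   bounds gamt_j by psi. The descent lemma for the (L+mu)-smooth g gives
   psi(y_{j+1}) <= gamt_j(yt_{j+1}) + L/2 |yt_{j+1} - xt_j|^2. Finally, the
   relation a_j^2 L = A_{j+1}(1 + mu A_j) and the choice of xt_j and x_{j+1}
   make the remaining quadratic terms differ by an explicit sum of squares. *)

Ltac dotv_coordinatewise :=
  rewrite /dotv; apply/eqP; rewrite -subr_eq0; apply/eqP;
  do 4!rewrite ?mulrDr ?mulrN ?mulr_sumr -?sumrN -?big_split /=;
  apply: big1 => i _; rewrite !mxE.

Section Euclidean.
Context {R : realType} {n : nat}.
Implicit Types (u v w : 'rV[R]_n).

Lemma dotvv_ge0 v : 0 <= dotv v v.
Proof. by apply: sumr_ge0 => i _; rewrite -expr2 sqr_ge0. Qed.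

Lemma sqr_enorm v : enorm v ^+ 2 = dotv v v.
Proof. by rewrite sqr_sqrtr // dotvv_ge0. Qed.

Lemma enormZ (s : R) v : 0 <= s -> enorm (s *: v) = s * enorm v.
Proof.
move=> s_ge0; rewrite /enorm (_ : dotv _ _ = s ^+ 2 * dotv v v).
  by rewrite sqrtrM ?sqr_ge0 // sqrtr_sqr ger0_norm.
by dotv_coordinatewise; ring.
Qed.

Lemma dotv_young (c : R) v w : 2 * c * dotv w v <= dotv w w + c ^+ 2 * dotv v v.
Proof.
rewrite -subr_ge0 (_ : _ - _ = dotv (w - c *: v) (w - c *: v)) ?dotvv_ge0 //.
by dotv_coordinatewise; ring.
Qed.

Lemma dotv_le_enorm (k : R) v w : 0 < k -> enorm w <= k * enorm v ->
  dotv w v <= k * enorm v ^+ 2.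
Proof.
move=> k_gt0 wv; have := dotv_young k v w.
have : dotv w w <= k ^+ 2 * dotv v v.
  by rewrite -!sqr_enorm -exprMn ler_pM ?sqrtr_ge0.
rewrite sqr_enorm; nra.
Qed.

Lemma dotv_three_point u v w :
  2 * dotv (u - v) (w - v) = enorm (v - u) ^+ 2 + enorm (w - v) ^+ 2 - enorm (w - u) ^+ 2.
Proof. by rewrite !sqr_enorm; dotv_coordinatewise; ring. Qed.

Lemma sqr_enorm_convex (t : R) u v :
  enorm (t *: u + (1 - t) *: v) ^+ 2
  = t * enorm u ^+ 2 + (1 - t) * enorm v ^+ 2 - t * (1 - t) * enorm (u - v) ^+ 2.
Proof. by rewrite !sqr_enorm; dotv_coordinatewise; ring. Qed.

End Euclidean.

Lemma derive_le_of_secant_le {R : realType} {V : normedModType R}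
    (f : V -> R) (x v : V) (B C : R) :
  derivable f x v ->
  (forall t, 0 < t <= 1 -> f (t *: v + x) - f x <= t * (B + t * C)) ->
  'D_v f x <= B.
Proof.
move=> df secant.
have quot_cvg : (fun t => t^-1 *: (f (t *: v + x) - f x)) @ 0^'+ --> 'D_v f x.
  exact: cvg_dnbhs_at_right df.
have bound_cvg : (fun t : R => B + t * C) @ 0^'+ --> B.
  rewrite -[X in _ --> X](addr0 B) -[X in _ --> _ + X](mul0r C).
  apply: cvgD; first exact: cvg_cst.
  by apply: cvgM; [exact: cvg_at_right_filter cvg_id | exact: cvg_cst].
apply: (ler_cvg_to quot_cvg bound_cvg).
near=> t.
have t_gt0 : 0 < t by near: t; exact: nbhs_right_gt.
have t_le1 : t <= 1 by near: t; exact: nbhs_right_le.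
by rewrite /GRing.scale /= ler_pdivrMl // secant // t_gt0.
Unshelve. all: by end_near.
Qed.

Section Gradient.
Context {R : realType} {n : nat}.
Context {g : 'rV[R]_n -> R} {dg : 'rV[R]_n -> 'rV[R]_n}.
Hypothesis g_grad : is_gradient g dg.

Lemma derive_gradient x v : 'D_v g x = dotv (dg x) v.
Proof. by have [g_diff dgE] := g_grad x; rewrite deriveE. Qed.

Lemma strongly_convex_ge_lin {mu : R} : strongly_convex mu g ->
  forall x u, lin g dg x u + mu / 2 * enorm (u - x) ^+ 2 <= g u.
Proof.
move=> g_sc x u; set N := enorm (u - x) ^+ 2.
suff : dotv (dg x) (u - x) <= g u - g x - mu / 2 * N by rewrite /lin; lra.
rewrite -derive_gradient; apply: (@derive_le_of_secant_le _ _ g x (u - x) _ (mu / 2 * N)).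
  by apply: diff_derivable; have [] := g_grad x.
move=> t /andP[t_gt0 t_le1].
have := g_sc u x t; rewrite ltW //= t_le1 => /(_ isT).
have -> : t *: u + (1 - t) *: x = t *: (u - x) + x.
  by apply/rowP => i; rewrite !mxE; ring.
rewrite -/N; nra.
Qed.

Lemma is_derive_line (x v : 'rV[R]_n) (s : R) :
  is_derive s 1 (fun t : R => g (t *: v + x)) (dotv (dg (s *: v + x)) v).
Proof.
have [g_diff dgE] := g_grad (s *: v + x).
have line_diff : is_diff s (fun t : R => t *: v + x) (fun t : R => t *: v).
  rewrite (_ : (fun t : R => t *: v) = (fun t : R => t *: v) + 0); last first.
    by apply/funext => t; rewrite /= addr0.
  exact: is_diffD.
have g_is_diff : is_diff (s *: v + x) g ('d g (s *: v + x)) by exact: DiffDef.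
have comp_diff := is_diff_comp line_diff g_is_diff.
have comp_differentiable := @ex_diff _ _ _ _ _ _ _ comp_diff.
apply: DeriveDef; first exact: diff_derivable.
by rewrite deriveE // (@diff_val _ _ _ _ _ _ _ comp_diff) /= scale1r dgE.
Qed.

Lemma smooth_le_lin {M : R} : 0 < M ->
  (forall y z, enorm (dg y - dg z) <= M * enorm (y - z)) ->
  forall x u, g u <= lin g dg x u + M / 2 * enorm (u - x) ^+ 2.
Proof.
move=> M_gt0 dg_lip x u.
set v := u - x; set D := dotv (dg x) v; set N := enorm v ^+ 2.
pose k (s : R) := g (s *: v + x) - (s * D + M / 2 * N * (s * s)).
have k_derive (s : R) :
    is_derive s 1 k (dotv (dg (s *: v + x)) v - (D + M / 2 * N * (2 * s))).
  apply: is_deriveB; first exact: is_derive_line.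
  by apply: is_derive_eq; rewrite scaler0 add0r /GRing.scale /=; ring.
have k_cont : {within `[0, 1], continuous k}.
  by apply: derivable_within_continuous => s _; exact: ex_derive.
have [xi /[!in_itv] /= /andP[xi_gt0 _] k_mvt] := MVT ltr01 (fun s _ => k_derive s) k_cont.
have slope_le : dotv (dg (xi *: v + x)) v - D <= M * xi * N.
  rewrite (_ : _ - D = dotv (dg (xi *: v + x) - dg x) v); last first.
    by rewrite /D; dotv_coordinatewise; ring.
  apply: dotv_le_enorm; first exact: mulr_gt0.
  by have := dg_lip (xi *: v + x) x; rewrite addrK enormZ ?mulrA // ltW.
move: k_mvt slope_le; rewrite /k /lin !scale0r scale1r !add0r subrK -/v -/D; nra.
Qed.

End Gradient.

Lemma ler_of_forall_ler_addr_mul {R : realFieldType} (X Y Z : R) :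
  (forall t, 0 < t <= 1 -> X <= Y + t * Z) -> X <= Y.
Proof.
move=> small; apply/ler_addgt0Pr => e e_gt0.
set w := e / (`|Z| + 1).
have w_gt0 : 0 < w by rewrite divr_gt0 // ltr_wpDl.
have wE : w * (`|Z| + 1) = e by rewrite divfK // gt_eqF // ltr_wpDl.
have := small (Num.min 1 w); rewrite lt_min ltr01 w_gt0 ge_min lexx => /(_ isT).
have : Num.min 1 w <= w by rewrite ge_min lexx orbT.
have : 0 < Num.min 1 w by rewrite lt_min ltr01.
have := ler_norm Z; have := normr_ge0 Z; nra.
Qed.

Section Prox.
Context {R : realType} {n : nat}.
Local Notation V := 'rV[R]_n.

Lemma convex_fun_lin_addl (g : V -> R) (dg : V -> V) (z : V) (h : V -> \bar R) :
  convex_fun h -> convex_fun (fun u => ((lin g dg z u)%:E + h u)%E).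
Proof.
move=> h_conv u w t t01.
have -> : lin g dg z (t *: u + (1 - t) *: w) = t * lin g dg z u + (1 - t) * lin g dg z w.
  rewrite /lin (_ : dotv _ _ = t * dotv (dg z) (u - z) + (1 - t) * dotv (dg z) (w - z)).
    by ring.
  by dotv_coordinatewise; ring.
rewrite !muleDr ?fin_num_adde_defr // addeACA -!EFinM -EFinD.
exact/leeD2l/h_conv.
Qed.

Lemma prox_three_point {phi : V -> \bar R} {M : R} {z p : V} :
  convex_fun phi -> phi p \is a fin_num ->
  (forall u, phi p + (M / 2 * enorm (p - z) ^+ 2)%:E
             <= phi u + (M / 2 * enorm (u - z) ^+ 2)%:E)%E ->
  forall u, (phi p + (M / 2 * enorm (p - z) ^+ 2 + M / 2 * enorm (u - p) ^+ 2)%:E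
             <= phi u + (M / 2 * enorm (u - z) ^+ 2)%:E)%E.
Proof.
move=> phi_conv phi_p_fin p_min u.
have phi_neq_ninfty w : phi w != -oo%E.
  apply: contraTneq (p_min w) => ->.
  by rewrite -(fineK phi_p_fin) -EFinD.
have phi_pE : phi p = (fine (phi p))%:E by rewrite fineK.
rewrite phi_pE; set q := fine (phi p).
case phi_u : (phi u) => [r | | ]; last by move: (phi_neq_ninfty u); rewrite phi_u.
  2: by rewrite leey.
rewrite -!EFinD lee_fin.
apply: (@ler_of_forall_ler_addr_mul _ _ _ (M / 2 * enorm (u - p) ^+ 2)).
move=> t /andP[t_gt0 t_le1]; set w := t *: u + (1 - t) *: p.
have := phi_conv u p t; rewrite ltW //= t_le1 phi_u phi_pE -/q => /(_ isT).
have := p_min w; rewrite phi_pE -/q.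
case: (phi w) (phi_neq_ninfty w) => [s _ | _ _ | //]; last by rewrite leNgt ltey.
move=> min_w conv_w.
rewrite -!EFinD lee_fin in min_w; rewrite -2!EFinM -EFinD lee_fin in conv_w.
have w_z : enorm (w - z) ^+ 2 = t * enorm (u - z) ^+ 2 + (1 - t) * enorm (p - z) ^+ 2
                              - t * (1 - t) * enorm (u - p) ^+ 2.
  rewrite (_ : w - z = t *: (u - z) + (1 - t) *: (p - z)); last first.
    by apply/rowP => i; rewrite !mxE; ring.
  by rewrite sqr_enorm_convex opprB addrA subrK.
rewrite w_z in min_w; rewrite -(ler_pM2l t_gt0); nra.
Qed.

End Prox.

Lemma acg_step_root {R : rcfType} {tau A a : R} : 0 < tau -> 0 <= A ->
  a = (tau + Num.sqrt (tau ^+ 2 + 4 * tau * A)) / 2 ->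
  0 < a /\ a ^+ 2 = tau * (A + a).
Proof.
move=> tau_gt0 A_ge0 ->; set s := Num.sqrt _.
have s_ge0 : 0 <= s := sqrtr_ge0 _.
have sE : s ^+ 2 = tau ^+ 2 + 4 * tau * A by rewrite sqr_sqrtr //; nra.
split; first lra.
by apply: (@mulfI _ 4); rewrite ?pnatr_eq0 //; nra.
Qed.

Lemma acg_quadratic_step {R : realType} {n : nat} {A a L mu : R}
    {y x yt xt xp : 'rV[R]_n} (u : 'rV[R]_n) :
  0 <= A -> 0 < a -> 0 < mu -> 0 < L -> a ^+ 2 * L = (A + a) * (1 + mu * A) ->
  xt = (A / (A + a)) *: y + (a / (A + a)) *: x ->
  xp = ((A + a) * mu + 1)^-1 *: ((L + mu) * a *: yt - (A * a * L / (A + a)) *: y) ->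
  (A + a) * (L / 2 * enorm (yt - xt) ^+ 2) + (1 + mu * (A + a)) / 2 * enorm (u - xp) ^+ 2
  <= A * (L * dotv (xt - yt) (y - yt) + mu / 2 * enorm (y - yt) ^+ 2)
   + a * (L * dotv (xt - yt) (u - yt) + mu / 2 * enorm (u - yt) ^+ 2)
   + (1 + mu * A) / 2 * enorm (u - x) ^+ 2.
Proof.
move=> A_ge0 a_gt0 mu_gt0 L_gt0 aL xtE xpE.
have Aa_gt0 : 0 < A + a by lra.
rewrite -subr_ge0.
set gap := _ - _.
have -> : gap = (A + a) * (L + mu) / 2
                  * enorm ((A / (A + a)) *: y + (a / (A + a)) *: xp - yt) ^+ 2
                + mu * A * a / (2 * (A + a)) * enorm (xp - y) ^+ 2.
  have LE : L = (A + a) * (1 + mu * A) / a ^+ 2 by rewrite -aL; field; exact: lt0r_neq0.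
  rewrite /gap !sqr_enorm xpE xtE LE; dotv_coordinatewise; field.
  by apply/and4P; split; apply: lt0r_neq0; nra.
have mu_A_a_ge0 : 0 <= mu * A * a by rewrite mulr_ge0 ?mulr_ge0 // ltW.
by apply: addr_ge0; apply: mulr_ge0; rewrite ?sqr_ge0 //; apply: divr_ge0; nra.
Qed.

Section ACG.
Context {R : realType} {n : nat}.
Local Notation V := 'rV[R]_n.
Context {mu L : R} {g : V -> R} {dg : V -> V} {h : V -> \bar R} {x0 : V}.
Context {A a tau : nat -> R} {x y xt yt : nat -> V}.
Hypotheses (mu_gt0 : 0 < mu) (L_gt0 : 0 < L).
Hypotheses (g_sc : strongly_convex mu g) (g_smooth : smooth_with (L + mu) g dg).
Hypotheses (h_proper : proper_fun h) (h_conv : convex_fun h).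
Let psi u := ((g u)%:E + h u)%E.
Hypotheses (A0 : A 0%N = 0) (tau0 : tau 0%N = 1 / L) (x_0 : x 0%N = x0).
Hypothesis aE : forall j, a j = (tau j + Num.sqrt (tau j ^+ 2 + 4 * tau j * A j)) / 2.
Hypothesis tauS : forall j, tau j.+1 = tau j + mu * a j / L.
Hypothesis AS : forall j, A j.+1 = A j + a j.
Hypothesis xtE : forall j, xt j = (A j / A j.+1) *: y j + (a j / A j.+1) *: x j.
Hypothesis yt_min : forall j u,
  ((lin g dg (xt j) (yt j.+1))%:E + h (yt j.+1)
     + ((L + mu) / 2 * enorm (yt j.+1 - xt j) ^+ 2)%:E
   <= (lin g dg (xt j) u)%:E + h u + ((L + mu) / 2 * enorm (u - xt j) ^+ 2)%:E)%E.
Hypothesis psi_y_le : forall j, (psi (y j.+1) <= psi (yt j.+1))%E.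
Hypothesis xS : forall j, x j.+1 = ((A j.+1 * mu + 1)^-1) *:
  ((L + mu) * a j *: yt j.+1 - (A j * a j * L / A j.+1) *: y j).
Let gamt j u := ((lin g dg (xt j) u)%:E + h u + (mu / 2 * enorm (u - xt j) ^+ 2)%:E)%E.
Let gam j u := (gamt j (yt j.+1)
  + (L * dotv (xt j - yt j.+1) (u - yt j.+1) + mu / 2 * enorm (u - yt j.+1) ^+ 2)%:E)%E.
Context {Gam : nat -> V -> \bar R}.
Hypothesis Gam0 : forall u, Gam 0%N u = 0%E.
Hypothesis GamS : forall j u,
  Gam j.+1 u = ((A j.+1)^-1%:E * ((A j)%:E * Gam j u + (a j)%:E * gam j u))%E.

Lemma A_ge0_tauE j : 0 <= A j /\ tau j = (1 + mu * A j) / L.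
Proof.
elim: j => [|j [A_ge0 tauE]]; first by rewrite A0 tau0 mulr0 addr0.
have tau_gt0 : 0 < tau j by rewrite tauE divr_gt0 // ltr_wpDr // mulr_ge0 // ltW.
have [a_gt0 _] := acg_step_root tau_gt0 A_ge0 (aE j).
rewrite AS tauS tauE; split; first lra.
by field; rewrite gt_eqF.
Qed.

Lemma A_ge0 j : 0 <= A j. Proof. by case: (A_ge0_tauE j). Qed.

Lemma a_gt0_sqr j : 0 < a j /\ a j ^+ 2 * L = A j.+1 * (1 + mu * A j).
Proof.
have [A_ge0 tauE] := A_ge0_tauE j.
have tau_gt0 : 0 < tau j by rewrite tauE divr_gt0 // ltr_wpDr // mulr_ge0 // ltW.
have [a_gt0 a_sqr] := acg_step_root tau_gt0 A_ge0 (aE j).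
by split; rewrite // a_sqr tauE AS; field; rewrite gt_eqF.
Qed.

Lemma h_yt_fin j : h (yt j.+1) \is a fin_num.
Proof.
have [h_ninfty [z z_fin]] := h_proper.
rewrite fin_numE h_ninfty /=; apply: contraTneq (yt_min j z) => ->.
by rewrite -(fineK z_fin) -!EFinD.
Qed.

Let c j := lin g dg (xt j) (yt j.+1) + fine (h (yt j.+1))
  + mu / 2 * enorm (yt j.+1 - xt j) ^+ 2.
Let q j u := L * dotv (xt j - yt j.+1) (u - yt j.+1) + mu / 2 * enorm (u - yt j.+1) ^+ 2.

Lemma gamE j u : gam j u = (c j + q j u)%:E.
Proof. by rewrite /gam /gamt -(fineK (h_yt_fin j)). Qed.

Lemma gam_le_psi j u : (gam j u <= psi u)%E.
Proof.
have [h_ninfty _] := h_proper.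
case h_u : (h u) => [r | | ]; last by move: (h_ninfty u); rewrite h_u.
  2: by rewrite /psi h_u addey // leey.
have model_fin : ((lin g dg (xt j) (yt j.+1))%:E + h (yt j.+1))%E \is a fin_num.
  by rewrite fin_numD h_yt_fin.
have := prox_three_point (convex_fun_lin_addl g dg (xt j) h h_conv) model_fin (yt_min j) u.
rewrite gamE /psi h_u -(fineK (h_yt_fin j)) -!EFinD !lee_fin /c /q.
have := dotv_three_point (xt j) (yt j.+1) u.
have [g_grad _] := g_smooth.
have := strongly_convex_ge_lin g_grad g_sc (xt j) u.
nra.
Qed.

Lemma psi_next_le j : (psi (y j.+1) <= (c j + L / 2 * enorm (yt j.+1 - xt j) ^+ 2)%:E)%E.
Proof.
apply: le_trans (psi_y_le j) _.
have [g_grad dg_lip] := g_smooth.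
have := smooth_le_lin g_grad (ltr_wpDr (ltW mu_gt0) L_gt0) dg_lip (xt j) (yt j.+1).
by rewrite /psi -(fineK (h_yt_fin j)) -EFinD lee_fin /c; lra.
Qed.

Lemma psi_y_fin j : psi (y j.+1) \is a fin_num.
Proof.
have [h_ninfty _] := h_proper.
rewrite fin_numE; apply/andP; split.
  by rewrite /psi; case: (h (y j.+1)) (h_ninfty (y j.+1)).
by rewrite lt_eqF // (le_lt_trans (psi_next_le j)) ?ltey.
Qed.

Fixpoint Gamr j u : R :=
  if j is k.+1 then (A k * Gamr k u + a k * (c k + q k u)) / A k.+1 else 0.

Lemma GamE j u : Gam j u = (Gamr j u)%:E.
Proof.
elim: j => [|j IH]; first by rewrite Gam0.
by rewrite GamS IH gamE /= mulrC.
Qed.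

(* [P 0] is a junk value when [psi x0 = +oo]; it only occurs multiplied by [A 0 = 0]. *)
Let P j := fine (psi (y j)).

Lemma model_le_value j : A j * (c j + q j (y j)) <= A j * P j.
Proof.
case: j => [|j]; first by rewrite A0 !mul0r.
apply: ler_wpM2l; first exact: A_ge0.
by rewrite -lee_fin /P fineK ?psi_y_fin // -gamE gam_le_psi.
Qed.

Lemma acg_invariant j u :
  A j * P j + (1 + mu * A j) / 2 * enorm (u - x j) ^+ 2
  <= A j * Gamr j u + 1 / 2 * enorm (u - x0) ^+ 2.
Proof.
elim: j => [|j IH]; first by rewrite A0 x_0 !mul0r mulr0 addr0 !add0r.
have [a_gt0 a_sqr] := a_gt0_sqr j.
have A'_gt0 : 0 < A j.+1 by rewrite AS ltr_wpDl ?A_ge0.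
have descent : A j.+1 * P j.+1 <= A j.+1 * (c j + L / 2 * enorm (yt j.+1 - xt j) ^+ 2).
  by rewrite ler_pM2l // -lee_fin /P fineK ?psi_y_fin ?psi_next_le.
have GamrS : A j.+1 * Gamr j.+1 u = A j * Gamr j u + a j * (c j + q j u).
  by rewrite /= mulrC divfK ?gt_eqF.
have [xt_j x_j1] := (xtE j, xS j); rewrite AS in a_sqr xt_j x_j1.
have := acg_quadratic_step u (A_ge0 j) a_gt0 mu_gt0 L_gt0 a_sqr xt_j x_j1.
have := model_le_value j.
move: descent GamrS IH; rewrite AS /q; lra.
Qed.

Lemma acg_estimate j u :
  ((A j)%:E * psi (y j) <= (A j)%:E * Gam j u + (1 / 2 * enorm (u - x0) ^+ 2)%:E)%E.
Proof.
case: j => [|j].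
  by rewrite A0 !mul0e add0e lee_fin mulr_ge0 ?sqr_ge0.
rewrite -(fineK (psi_y_fin j)) GamE -!EFinM -EFinD lee_fin.
have := acg_invariant j.+1 u.
have : 0 <= (1 + mu * A j.+1) / 2 * enorm (u - x j.+1) ^+ 2.
  by rewrite mulr_ge0 ?sqr_ge0 // divr_ge0 // addr_ge0 // mulr_ge0 ?A_ge0 // ltW.
rewrite /P; lra.
Qed.

End ACG.

Theorem lemma2p3 (R : realType) (n : nat) (mu L : R)
  (g : 'rV[R]_n -> R) (dg : 'rV[R]_n -> 'rV[R]_n) (h : 'rV[R]_n -> \bar R)
  (x0 : 'rV[R]_n)
  (A a tau : nat -> R) (x y xt yt : nat -> 'rV[R]_n) :
  0 < mu -> 0 < L ->
  strongly_convex mu g -> smooth_with (L + mu) g dg ->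
  proper_fun h -> closed_fun h -> convex_fun h ->
  let psi := fun u => ((g u)%:E + h u)%E in
  (* ACG method *)
  A 0%N = 0 -> tau 0%N = 1 / L -> y 0%N = x0 -> x 0%N = x0 ->
  (forall j, a j = (tau j + Num.sqrt (tau j ^+ 2 + 4 * tau j * A j)) / 2) ->
  (forall j, tau j.+1 = tau j + mu * a j / L) ->
  (forall j, A j.+1 = A j + a j) ->
  (forall j, xt j = (A j / A j.+1) *: y j + (a j / A j.+1) *: x j) ->
  (forall j u,
     ((lin g dg (xt j) (yt j.+1))%:E + h (yt j.+1)
        + ((L + mu) / 2 * enorm (yt j.+1 - xt j) ^+ 2)%:E
      <= (lin g dg (xt j) u)%:E + h u
        + ((L + mu) / 2 * enorm (u - xt j) ^+ 2)%:E)%E) ->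
  (forall j, (y j.+1 = y j \/ y j.+1 = yt j.+1) /\
             (psi (y j.+1) <= psi (y j))%E /\
             (psi (y j.+1) <= psi (yt j.+1))%E) ->
  (forall j, x j.+1 = ((A j.+1 * mu + 1)^-1) *:
       ((L + mu) * a j *: yt j.+1 - (A j * a j * L / A j.+1) *: y j)) ->
  let gamt := fun j u => ((lin g dg (xt j) u)%:E + h u
                          + (mu / 2 * enorm (u - xt j) ^+ 2)%:E)%E in
  let gam := fun j u => (gamt j (yt j.+1)
       + (L * dotv (xt j - yt j.+1) (u - yt j.+1)
          + mu / 2 * enorm (u - yt j.+1) ^+ 2)%:E)%E in
  forall Gam : nat -> 'rV[R]_n -> \bar R,
  (forall u, Gam 0%N u = 0%E) ->
  (forall j u, Gam j.+1 u =
       ((A j.+1)^-1%:E * ((A j)%:E * Gam j u + (a j)%:E * gam j u))%E) ->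
  forall j u,
    ((A j)%:E * psi (y j) <= (A j)%:E * Gam j u + (1 / 2 * enorm (u - x0) ^+ 2)%:E)%E.
Proof.
(* Closedness of [h] only guarantees that the prox points [yt] exist; here they are given. *)
move=> mu_gt0 L_gt0 g_sc g_smooth h_proper _ h_conv psi A0 tau0 _ x_0 aE tauS AS xtE
  yt_min y_next xS gamt gam Gam Gam0 GamS.
have psi_y_le j : (psi (y j.+1) <= psi (yt j.+1))%E by case: (y_next j) => _ [].
exact: (acg_estimate mu_gt0 L_gt0 g_sc g_smooth h_proper h_conv A0 tau0 x_0 aE tauS AS
  xtE yt_min psi_y_le xS Gam0 GamS).
Qed.
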